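(* Let $n\ge 1$ and let $D$ be a diagram of $[n]^2$. Then the vertex set of the Schubitope $\mathcal{S}_D$ is \[\{x(w)\colon w\in S_n\},\] where, for $w\in S_n$, $x(w)=(x_1,\ldots,x_n)$ is the vector such that $x_k$ ($1\le k\le n$) is the number of appearances of the integer $k$ in the filling $\mathcal{F}_w(D)$.
   Context: $[n]=\{1,\ldots,n\}$. A diagram $D$ of $[n]^2$ is a set of boxes $(i,j)$ (row $i$, column $j$, rows numbered $1,\dots,n$ top to bottom, columns $1,\dots,n$ left to right) of the $n\times n$ grid. For $1\le j\le n$ and $S\subseteq[n]$, let $\mathrm{word}_{j,S}(D)$ be the string obtained by reading column $j$ from top to bottom and recording, for row $i$: ''('' if $(i,j)\notin D$ and $i\in S$; '')'' if $(i,j)\in D$ and $i\notin S$; ''$\star$'' if $(i,j)\in D$ and $i\in S$ (nothing otherwise). Let $\theta_D^j(S)$ be the number of matched pairs ''()'' in this string (standard parenthesis matching, ignoring $\star$'s) plus the number of $\star$'s, and $\theta_D(S)=\sum_{j=1}^n\theta_D^j(S)$. The Schubitope is $\mathcal{S}_D=\{x\in\mathbb{R}^n\colon \sum_{i\in[n]}x_i=\#D,\ \sum_{i\in S}x_i\le\theta_D(S)\text{ for all }S\subsetneq[n]\}$. For $w=w_1\cdots w_n\in S_n$, the filling $\mathcal{F}_w(D)$ is defined column by column: for each column $D_j=\{i\colon (i,j)\in D\}$, for $k=1,2,\ldots,n$ in turn, place $w_k$ into the topmost box of column $j$ of $D$ that is still empty and whose row index is $\ge w_k$; if no such box exists, $w_k$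 is skipped for this column. Boxes may remain empty. *)

(* Indices are 0-based: row/column/value k : 'I_n stands for k+1. *)
From mathcomp Require Import all_boot all_order all_algebra all_fingroup.
From mathcomp Require Import reals.
Set Implicit Arguments. Unset Strict Implicit. Unset Printing Implicit Defensive.
Import Order.TTheory GRing.Theory Num.Theory.
Local Open Scope ring_scope.

(* A diagram of [n]^2: a set of boxes (row, column). *)
Definition diagram (n : nat) := {set 'I_n * 'I_n}.

Inductive sym := Open | Close | Star.

Definition letter n (D : diagram n) (S : {set 'I_n}) (j i : 'I_n) : option sym :=
  match (i, j) \in D, i \in S with
  | false, true => Some Open
  | true, false => Some Close
  | true, true => Some Star
  | false, false => None
  end.

Definition word n (D : diagram n) (j : 'I_n) (S : {set 'I_n}) : seq sym :=
  pmap (letter D S j) (enum 'I_n).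

(* number of matched pairs "()" by standard matching, ignoring stars;
   [open] = number of currently unmatched "(" *)
Fixpoint matched_aux (open : nat) (w : seq sym) : nat :=
  match w with
  | [::] => 0
  | Open :: w' => matched_aux open.+1 w'
  | Close :: w' => if open is o.+1 then (matched_aux o w').+1 else matched_aux 0 w'
  | Star :: w' => matched_aux open w'
  end.

Definition matched (w : seq sym) : nat := matched_aux 0 w.

Definition nstars (w : seq sym) : nat :=
  count (fun s => if s is Star then true else false) w.

Definition theta_col n (D : diagram n) (j : 'I_n) (S : {set 'I_n}) : nat :=
  matched (word D j S) + nstars (word D j S).

Definition theta n (D : diagram n) (S : {set 'I_n}) : nat :=
  (\sum_(j < n) theta_col D j S)%N.

Definition schubitope (R : realType) n (D : diagram n) (x : 'rV[R]_n) : Prop :=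
  \sum_(i < n) x 0 i = (#|D|)%:R /\
  forall S : {set 'I_n}, S != setT -> \sum_(i in S) x 0 i <= (theta D S)%:R.

Definition is_vertex (R : realType) n (P : 'rV[R]_n -> Prop) (x : 'rV[R]_n) : Prop :=
  P x /\ forall (y z : 'rV[R]_n) (t : R), P y -> P z -> 0 < t -> t < 1 ->
    x = t *: y + (1 - t) *: z -> y = z.

(* Filling of a column: a partial map row -> value.  Placing value v:
   topmost (minimal row) empty box of column j of D with row >= v. *)
Definition fill_step n (D : diagram n) (j : 'I_n) (f : 'I_n -> option 'I_n) (v : 'I_n)
  : 'I_n -> option 'I_n :=
  match [seq i <- enum 'I_n | [&& (i, j) \in D, f i == None & (v <= i)%N] ] with
  | [::] => f
  | i0 :: _ => fun i => if i == i0 then Some v else f i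
  end.

(* F_w(D) restricted to column j: insert w_1, ..., w_n in turn *)
Definition filling_col n (D : diagram n) (w : 'S_n) (j : 'I_n) : 'I_n -> option 'I_n :=
  foldl (fill_step D j) (fun _ => None) [seq w k | k <- enum 'I_n].

Definition xw (R : realType) n (D : diagram n) (w : 'S_n) : 'rV[R]_n :=
  \row_(k < n) ((\sum_(j < n) #|[set i | filling_col D w j i == Some k]|)%N)%:R.

(* Reading column j as a bracket word, a cut between two rows bounds the matched pairs by
   the "(" above it plus the ")" below it, and some cut attains the bound; adding the stars,
   θ_D^j(S) is the least over cuts of #(S above the cut) + #(boxes of D_j below it).  Hence θ_D
   is submodular, and for x in S_D the sets S with Σ_{i∈S} x_i = θ_D(S) ("tight" sets) are
   closed under union and intersection.

   In F_w(D) a value v always sits in a row ≥ v, so in every column the values from S fill at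
   most θ_D^j(S) boxes; for a prefix S = {w_1, ..., w_t} of w, greediness makes this an equality
   (cut just below the lowest box these values left empty).  So x(w) lies in S_D and is tight
   along the maximal chain of prefixes of w, which pins down a single point: x(w) is a vertex.

   Conversely, at a vertex x any a ≠ b are separated by a tight set, otherwise x ± ε(e_a - e_b)
   stays in S_D.  Hence the least tight set containing b has more elements than the least one
   containing any other of its elements; listing [n] by increasing size of these sets gives a w
   whose prefixes are all tight, and x = x(w) since both are tight along that chain. *)

From mathcomp Require Import all_boot all_order all_algebra all_fingroup.
From mathcomp Require Import reals.
From mathcomp Require Import zify ring lra.
Set Implicit Arguments. Unset Strict Implicit. Unset Printing Implicit Defensive.

Lemma sum_nat_cond_card (T : finType) (P Q : pred T) :
  \sum_(i | P i) Q i = #|[set i | P i && Q i]|.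
Proof.
rewrite -sum1_card; under [RHS]eq_bigl do rewrite inE.
by rewrite big_mkcondr; apply: eq_bigr => i _; case: (Q i).
Qed.

Lemma sum_eq_mem (T : finType) (S : {set T}) (a : T) : \sum_(i in S) (i == a) = (a \in S) :> nat.
Proof.
have [aS | aNS] := boolP (a \in S).
  by rewrite (bigD1 a) //= eqxx big1 // => i /andP[_ /negbTE ->].
by rewrite big1 // => i iS; case: eqP => // ia; rewrite -ia iS in aNS.
Qed.

Section EnumOrd.
Variable n : nat.
Implicit Types (a : pred 'I_n) (m : nat).

Lemma sum_ord_cut (F : 'I_n -> nat) m :
  \sum_(i < n) F i = \sum_(i < n | i < m) F i + \sum_(i < n | m <= i) F i.
Proof.
rewrite (bigID (fun i : 'I_n => i < m)) /=; congr (_ + _).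
by apply: eq_bigl => i; rewrite -leqNgt.
Qed.

Lemma count_enum_ord a : count a (enum 'I_n) = \sum_(i < n) a i.
Proof. by rewrite -sum1_count big_enum_cond big_mkcond. Qed.

Lemma count_take_enum_ord a m : count a (take m (enum 'I_n)) = \sum_(i < n | i < m) a i.
Proof.
have take_filter : perm_eq (take m (enum 'I_n)) [seq i : 'I_n <- enum 'I_n | i < m].
  apply: uniq_perm => [||i]; [exact: take_uniq (enum_uniq _) | exact: filter_uniq (enum_uniq _) |].
  by rewrite mem_filter in_take ?mem_enum // index_enum_ord andbT.
rewrite (seq.permP take_filter) count_filter count_enum_ord [RHS]big_mkcond.
by apply: eq_bigr => i _ /=; case: (i < m); rewrite ?andbT ?andbF.
Qed.

Lemma count_drop_enum_ord a m : count a (drop m (enum 'I_n)) = \sum_(i < n | m <= i) a i.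
Proof.
rewrite -[LHS](addKn (count a (take m (enum 'I_n)))) -count_cat cat_take_drop.
by rewrite count_take_enum_ord count_enum_ord (sum_ord_cut _ m) addKn.
Qed.
End EnumOrd.

Lemma perm_sorting n (F : 'I_n -> nat) :
  exists w : 'S_n, forall a b, F a < F b -> (w^-1)%g a < (w^-1)%g b.
Proof.
case: n F => [|n] F; first by exists 1%g => -[].
set s := sort (fun a b => F a <= F b) (enum 'I_n.+1).
have s_sorted : sorted (fun a b => F a <= F b) s by apply: sort_sorted => a b; apply: leq_total.
have s_perm : perm_eq s (enum 'I_n.+1) by rewrite perm_sort.
have size_s : size s = n.+1 by rewrite (perm_size s_perm) size_enum_ord.
have nth_inj : injective (fun i : 'I_n.+1 => nth ord0 s i).
  move=> i i' /eqP; rewrite nth_uniq ?size_s // ?(perm_uniq s_perm) ?enum_uniq //.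
  by move/eqP/val_inj.
exists (perm nth_inj) => a b; apply: contraTT; rewrite -!leqNgt => le_ba.
have := sorted_leq_nth (fun _ _ _ => @leq_trans _ _ _) (fun _ => leqnn _) ord0 s_sorted.
move/(_ ((perm nth_inj)^-1 b)%g ((perm nth_inj)^-1 a)%g); rewrite !inE size_s !ltn_ord.
by move/(_ isT isT le_ba); rewrite -!(permE nth_inj) !permKV.
Qed.

(** * Cuts of a column *)

Definition opening (c : option sym) := if c is Some Open then true else false.
Definition closing (c : option sym) := if c is Some Close then true else false.
Definition starring (c : option sym) := if c is Some Star then true else false.

Section MatchedCuts.
Variables (T : Type) (L : T -> option sym).
Implicit Types (s : seq T) (o k : nat).

Lemma nstars_pmap s : nstars (pmap L s) = count (starring \o L) s.
Proof. by elim: s => //= x s IH; case: (L x) => [[]|] /=; rewrite IH. Qed.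

Lemma matched_aux_le_closing o s : matched_aux o (pmap L s) <= count (closing \o L) s.
Proof.
elim: s o => [|x s IH] o //=.
case: (L x) => [[]|] /=; [have := IH o.+1 | case: o => [|o] /=; [have := IH 0 | have := IH o]
  | have := IH o | have := IH o]; lia.
Qed.

Lemma matched_aux_le_cut o s k :
  matched_aux o (pmap L s) <= o + count (opening \o L) (take k s) + count (closing \o L) (drop k s).
Proof.
elim: s o k => [|x s IH] o [|k] //=.
  by rewrite (leq_trans (matched_aux_le_closing o (x :: s))) ?leq_addl.
case: (L x) => [[]|] /=; [have := IH o.+1 k | case: o => [|o] /=; [have := IH 0 k | have := IH o k]
  | have := IH o k | have := IH o k]; lia.
Qed.

(* In the first alternative the cut falls inside the [o] pending open brackets. *)
Lemma matched_aux_cut_attained o s :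
  matched_aux o (pmap L s) = count (closing \o L) s \/
  exists2 k, k <= size s & matched_aux o (pmap L s) =
    o + count (opening \o L) (take k s) + count (closing \o L) (drop k s).
Proof.
elim: s o => [|x s IH] o /=; first by left.
case E: (L x) => [[]|] /=;
  [case: (IH o.+1) | case: o => [|o] /=; [case: (IH 0) | case: (IH o)]
  | case: (IH o) | case: (IH o)].
all: first [move=> -> | move=> [k kle ->]].
all: first [by left | by right; exists 1; rewrite //= take0 drop0 E
  | by right; exists k.+1; rewrite //= E /=; lia].
Qed.

Lemma matched_cut_attained s : exists2 k, k <= size s &
  matched (pmap L s) = count (opening \o L) (take k s) + count (closing \o L) (drop k s).
Proof.
rewrite /matched; case: (matched_aux_cut_attained 0 s) => [->|[k ks ->]]; last by exists k.
by exists 0; rewrite ?take0 ?drop0.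
Qed.

End MatchedCuts.

Section Column.
Variables (n : nat) (D : diagram n) (j : 'I_n).
Implicit Types (S T : {set 'I_n}) (m : nat).

Definition theta_cut S m : nat := \sum_(i < n) (if i < m then i \in S else (i, j) \in D).

Lemma theta_cutE S m :
  theta_cut S m = \sum_(i < n | i < m) (i \in S) + \sum_(i < n | m <= i) ((i, j) \in D).
Proof.
rewrite /theta_cut (sum_ord_cut _ m); congr (_ + _); apply: eq_bigr => i; first by move=> ->.
by rewrite leqNgt => /negbTE ->.
Qed.

Lemma theta_cut_letters S m : theta_cut S m =
  count (opening \o letter D S j) (take m (enum 'I_n)) +
  count (closing \o letter D S j) (drop m (enum 'I_n)) +
  count (starring \o letter D S j) (enum 'I_n).
Proof.
rewrite -[in count (starring \o _) _](cat_take_drop m (enum 'I_n)) count_cat addnACA.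
rewrite !count_take_enum_ord !count_drop_enum_ord -!big_split theta_cutE /=.
by congr (_ + _); apply: eq_bigr => i _; rewrite /letter; case: (i \in S); case: ((i, j) \in D).
Qed.

Lemma theta_col_le_cut S m : theta_col D j S <= theta_cut S m.
Proof.
by rewrite theta_cut_letters /theta_col /word nstars_pmap leq_add2r (matched_aux_le_cut _ 0).
Qed.

Lemma theta_col_cut_attained S : exists2 m, m <= n & theta_col D j S = theta_cut S m.
Proof.
have [m] := matched_cut_attained (letter D S j) (enum 'I_n).
rewrite size_enum_ord => mn Em; exists m => //.
by rewrite theta_cut_letters /theta_col /word nstars_pmap Em.
Qed.

Lemma theta_cut_submod S T m1 m2 : m1 <= m2 ->
  theta_cut (S :|: T) m1 + theta_cut (S :&: T) m2 <= theta_cut S m1 + theta_cut T m2.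
Proof.
move=> m12; rewrite -!big_split; apply: leq_sum => i _ /=; rewrite in_setU in_setI.
case: (ltnP i m1) => [i1|_]; first rewrite (leq_trans i1 m12).
all: by case: (i \in S); case: (i \in T); case: (i < m2); case: ((i, j) \in D).
Qed.

Lemma theta_col_submod S T :
  theta_col D j (S :|: T) + theta_col D j (S :&: T) <= theta_col D j S + theta_col D j T.
Proof.
have [m1 _ ->] := theta_col_cut_attained S; have [m2 _ ->] := theta_col_cut_attained T.
case: (leqP m1 m2) => [m12 | /ltnW m21].
  apply: leq_trans (theta_cut_submod _ _ m12).
  exact: leq_add (theta_col_le_cut _ m1) (theta_col_le_cut _ m2).
rewrite setUC setIC [leqRHS]addnC.
apply: leq_trans (theta_cut_submod _ _ m21).
exact: leq_add (theta_col_le_cut _ m2) (theta_col_le_cut _ m1).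
Qed.

Lemma theta_col0 : theta_col D j set0 = 0.
Proof.
apply/eqP; rewrite -leqn0; apply: leq_trans (theta_col_le_cut set0 n) _.
by rewrite leqn0; apply/eqP/big1 => i _; rewrite ltn_ord inE.
Qed.

Lemma theta_colT : theta_col D j setT = \sum_(i < n) ((i, j) \in D).
Proof.
apply/eqP; rewrite eqn_leq; apply/andP; split.
  apply: leq_trans (theta_col_le_cut setT 0) _.
  by rewrite /theta_cut; under eq_bigr do rewrite ltn0.
have [m _ ->] := theta_col_cut_attained setT.
by apply: leq_sum => i _; rewrite inE; case: (i < m); rewrite ?leq_b1.
Qed.

End Column.

Section Theta.
Variables (n : nat) (D : diagram n).

Lemma theta_submod S T : theta D (S :|: T) + theta D (S :&: T) <= theta D S + theta D T.
Proof. by rewrite -!big_split; apply: leq_sum => j _; apply: theta_col_submod. Qed.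

Lemma theta0 : theta D set0 = 0.
Proof. by apply: big1 => j _; apply: theta_col0. Qed.

Lemma thetaT : theta D setT = #|D|.
Proof.
rewrite /theta; under eq_bigr do rewrite theta_colT.
rewrite exchange_big pair_big /=.
by rewrite -sum1_card [RHS]big_mkcond; apply: eq_bigr => -[i j] _ /=; case: ((i, j) \in D).
Qed.

End Theta.

(** * Greedy fillings *)

Section FillColumn.
Variables (n : nat) (D : diagram n) (j : 'I_n).
Implicit Types (f : 'I_n -> option 'I_n) (u r : seq 'I_n) (v : 'I_n) (S : {set 'I_n}).

Definition fillable f v i := [&& (i, j) \in D, f i == None & v <= i].

Variant fill_step_spec f v : ('I_n -> option 'I_n) -> Prop :=
| FillStepNone of (forall i, ~~ fillable f v i) : fill_step_spec f v f
| FillStepAt i0 of fillable f v i0 & (forall i, fillable f v i -> i0 <= i) :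
    fill_step_spec f v (fun i => if i == i0 then Some v else f i).

Lemma fill_stepP f v : fill_step_spec f v (fill_step D j f v).
Proof.
rewrite /fill_step -/(fillable f v); set l := filter _ _.
have mem_l i : (i \in l) = fillable f v i by rewrite mem_filter mem_enum andbT.
have leq_ord_trans : transitive (relpre (@nat_of_ord n) leq) by move=> ? ? ? /=; apply: leq_trans.
have sorted_l : sorted (relpre (@nat_of_ord n) leq) l.
  by apply: sorted_filter => //; rewrite -sorted_map val_enum_ord iota_sorted.
case E: l mem_l sorted_l => [|i0 l'] mem_l sorted_l.
  by constructor=> i; rewrite -mem_l.
constructor=> [|i]; first by rewrite -mem_l mem_head.
rewrite -mem_l inE => /predU1P[-> // | il'].
by move/(order_path_min leq_ord_trans)/allP: sorted_l; apply.
Qed.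

Record filled_by u f : Prop := FilledBy {
  filled_by_box : forall i v, f i = Some v -> [/\ (i, j) \in D, v <= i & v \in u];
  filled_by_inj : forall i i' v, f i = Some v -> f i' = Some v -> i = i';
  filled_by_greedy : forall v e, v \in u -> fillable f v e ->
    exists2 i : 'I_n, i <= e & f i = Some v }.

Lemma filled_by_step u f v :
  v \notin u -> filled_by u f -> filled_by (rcons u v) (fill_step D j f v).
Proof.
move=> vu [box inj greedy]; case: fill_stepP => [none | i0 fill_i0 min_i0].
  split=> // [i v' /box[Di v'i v'u] | v' e]; first by rewrite mem_rcons inE v'u orbT.
  rewrite mem_rcons inE => /predU1P[-> fe | v'u]; last exact: greedy.
  by move: (none e); rewrite fe.
have [Di0 /eqP fi0 vi0] := and3P fill_i0.
have fillable_step v' e :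
    fillable (fun i => if i == i0 then Some v else f i) v' e -> fillable f v' e.
  by rewrite /fillable; case: (eqVneq e i0) => [-> /=|//]; rewrite andbF.
split.
- move=> i v'; case: eqP => [-> [<-] | _ /box[Di v'i v'u]].
    by rewrite mem_rcons mem_head.
  by rewrite mem_rcons inE v'u orbT.
- move=> i i' v'; case: (eqVneq i i0) => [-> | ii0]; case: (eqVneq i' i0) => [-> // | i'i0].
  + by move=> [<-] /box[_ _]; rewrite (negbTE vu).
  + by move=> /box[_ _ v'u] [v'v]; rewrite v'v v'u in vu.
  + exact: inj.
- move=> v' e; rewrite mem_rcons inE => /predU1P[-> | v'u] /fillable_step fill_e.
    by exists i0; rewrite ?eqxx // min_i0.
  have [i ie fi] := greedy v' e v'u fill_e.
  by exists i => //; case: eqP => [ii0 | //]; rewrite -ii0 fi in fi0.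
Qed.

Lemma filled_by_foldl u : uniq u -> filled_by u (foldl (fill_step D j) (fun _ => None) u).
Proof.
elim/last_ind: u => [_ | u v IH]; first by split.
by rewrite rcons_uniq foldl_rcons => /andP[vu /IH]; apply: filled_by_step.
Qed.

Lemma foldl_fill_step_Some f r i v :
  v \notin r -> foldl (fill_step D j) f r i = Some v <-> f i = Some v.
Proof.
elim: r f => [|a r IH] f //=; rewrite inE negb_or => /andP[va vr]; rewrite IH //.
case: fill_stepP => // i0 /and3P[_ /eqP fi0 _] _; case: eqP => [-> | //].
by rewrite fi0; split=> // -[av]; rewrite av eqxx in va.
Qed.

Definition entry_in f S i := if f i is Some v then v \in S else false.

Definition nentries f S : nat := \sum_(i < n) entry_in f S i.

Definition nfilled f : nat := \sum_(i < n) (f i != None).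

Lemma sum_card_entries f S :
  \sum_(k in S) #|[set i | f i == Some k]| = nentries f S.
Proof.
under eq_bigr do rewrite -sum1_card big_mkcond /=.
rewrite exchange_big; apply: eq_bigr => i _; rewrite /entry_in.
under eq_bigr do rewrite inE.
case: (f i) => [v|]; last by rewrite big1.
by under eq_bigr do rewrite (inj_eq Some_inj) eq_sym; apply: sum_eq_mem.
Qed.

Lemma nentries_foldl_fill u f r : filled_by u f -> (forall v, v \in u -> v \notin r) ->
  nentries (foldl (fill_step D j) f r) [set v | v \in u] = nfilled f.
Proof.
move=> fu ur; apply: eq_bigr => i _; rewrite /entry_in.
case f_i: (f i) => [v|] /=.
  have [_ _ vu] := filled_by_box fu f_i.
  by rewrite ((foldl_fill_step_Some f i (ur _ vu)).2 f_i) inE vu.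
case g_i: (foldl _ f r i) => [v|] //; rewrite inE; case vu: (v \in u) => //.
by move/(foldl_fill_step_Some f i (ur _ vu)): g_i; rewrite f_i.
Qed.

(* An entry [v] sits in a row [>= v], so the entries above the cut are distinct values of [S]
   above the cut. *)
Lemma nentries_le_cut u f S m : filled_by u f -> nentries f S <= theta_cut D j S m.
Proof.
move=> [box inj _]; rewrite theta_cutE /nentries (sum_ord_cut _ m); apply: leq_add.
  rewrite !sum_nat_cond_card.
  have inj_val :
      {in [set i : 'I_n | (i < m) && entry_in f S i] &, injective (fun i => odflt i (f i))}.
    move=> i i'; rewrite !inE /entry_in.
    case fi: (f i) => [v|]; last by rewrite andbF.
    case fi': (f i') => [v'|]; last by rewrite andbF.
    by move=> ? ? /= vv'; apply: (inj _ _ v fi); rewrite fi' vv'.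
  rewrite -(card_in_imset inj_val); apply/subset_leq_card/subsetP => _ /imsetP[i + ->].
  rewrite !inE /entry_in; case fi: (f i) => [v|]; last by rewrite andbF.
  move=> /andP[im vS].
  by have [_ vi _] := box _ _ fi; rewrite vS andbT (leq_ltn_trans vi im).
apply: leq_sum => i _; rewrite /entry_in; case fi: (f i) => [v|] //.
by have [Di _ _] := box _ _ fi; rewrite Di leq_b1.
Qed.

Lemma nentries_le_theta_col u f S : filled_by u f -> nentries f S <= theta_col D j S.
Proof. by move=> fu; have [m _ ->] := theta_col_cut_attained D j S; apply: nentries_le_cut fu. Qed.

(* Cut just below the lowest empty box: by greediness each value of [u] above the cut is placed
   above it, and every box of the column below it is filled. *)
Lemma theta_col_le_nfilled u f : filled_by u f -> theta_col D j [set v | v \in u] <= nfilled f.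
Proof.
move=> [box _ greedy]; set m := \max_(e | ((e, j) \in D) && (f e == None)) e.+1.
have empty_lt_m e : (e, j) \in D -> f e = None -> e < m.
  by move=> De fe; apply: (@leq_bigmax_cond _ _ (fun e : 'I_n => e.+1)); rewrite De fe.
apply: leq_trans (theta_col_le_cut D j _ m) _.
rewrite theta_cutE /nfilled (sum_ord_cut _ m); apply: leq_add; last first.
  apply: leq_sum => i mi; case Di: ((i, j) \in D) => //; rewrite lt0b; apply/eqP => fi.
  by have := empty_lt_m i Di fi; rewrite ltnNge mi.
rewrite !sum_nat_cond_card.
apply: leq_trans (leq_imset_card (fun i => odflt i (f i)) _).
apply/subset_leq_card/subsetP => v; rewrite !inE => /andP[vm vu].
have [e fill_e] : exists e, fillable f v e.
  case: (pickP (fillable f v)) => [e fill_e | none]; first by exists e.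
  move: vm; rewrite ltnNge => /negP[]; apply/bigmax_leqP => e /andP[De fe].
  by have := none e; rewrite /fillable De fe /= => /negbT; rewrite -ltnNge.
have [i ie fi] := greedy v e vu fill_e.
have /and3P[De /eqP fe _] := fill_e.
apply/imsetP; exists i; last by rewrite fi.
by rewrite inE fi andbT (leq_ltn_trans ie (empty_lt_m e De fe)).
Qed.

End FillColumn.

Section InsertionOrder.
Variables (n : nat) (D : diagram n) (w : 'S_n).

(* The values [w_1, ..., w_t] inserted first. *)
Definition wprefix t : {set 'I_n} := [set v | (w^-1)%g v < t].

Lemma insertion_uniq : uniq [seq w k | k <- enum 'I_n].
Proof. by rewrite map_inj_uniq ?enum_uniq //; apply: perm_inj. Qed.

Lemma mem_take_insertion t v : (v \in take t [seq w k | k <- enum 'I_n]) = (v \in wprefix t).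
Proof.
rewrite inE -map_take -[v in LHS](permKV w) mem_map; last exact: perm_inj.
by rewrite in_take ?mem_enum // index_enum_ord.
Qed.

Lemma nentries_filling_le j S : nentries (filling_col D w j) S <= theta_col D j S.
Proof. exact: nentries_le_theta_col S (filled_by_foldl D j insertion_uniq). Qed.

Lemma nentries_filling_prefix j t :
  nentries (filling_col D w j) (wprefix t) = theta_col D j (wprefix t).
Proof.
apply/eqP; rewrite eqn_leq nentries_filling_le /=.
set ins := [seq w k | k <- enum 'I_n].
have := insertion_uniq; rewrite -/ins -(cat_take_drop t ins) cat_uniq.
case/and3P=> take_ins_uniq disj _; have ft_filled := filled_by_foldl D j take_ins_uniq.
have -> : wprefix t = [set v | v \in take t ins].
  by apply/setP => v; rewrite inE mem_take_insertion.
have -> : filling_col D w j =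
    foldl (fill_step D j) (foldl (fill_step D j) (fun _ => None) (take t ins)) (drop t ins).
  by rewrite /filling_col -foldl_cat cat_take_drop.
rewrite (nentries_foldl_fill ft_filled) ?theta_col_le_nfilled // => v vt.
by apply: contra disj => vd; apply/hasP; exists v.
Qed.

End InsertionOrder.

(** * Vertices of the Schubitope *)

Import Order.TTheory GRing.Theory Num.Theory.
Local Open Scope ring_scope.

Section Schubitope.
Variables (R : realType) (n : nat) (D : diagram n).
Implicit Types (x y z : 'rV[R]_n) (S T : {set 'I_n}) (w : 'S_n).

Definition xsum x S := \sum_(i in S) x 0 i.

Definition tight x S := xsum x S == (theta D S)%:R.

Lemma schubitopeP x :
  schubitope D x <-> (forall S, xsum x S <= (theta D S)%:R) /\ tight x setT.
Proof.
have xsumT : xsum x setT = \sum_(i < n) x 0 i by apply: eq_bigl => i; rewrite in_setT.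
rewrite /tight xsumT thetaT; split=> [[sumx le_x] | [le_x /eqP sumx]].
  split=> [S|]; last by rewrite sumx.
  by have [-> | /le_x //] := eqVneq S setT; rewrite xsumT thetaT sumx.
by split=> // S _; apply: le_x.
Qed.

Lemma xsumUI x S T : xsum x (S :|: T) + xsum x (S :&: T) = xsum x S + xsum x T.
Proof.
rewrite /xsum !(big_mkcond (fun i => i \in _)) -!big_split; apply: eq_bigr => i _ /=.
by rewrite in_setU in_setI; case: (i \in S); case: (i \in T); rewrite ?addr0 ?add0r.
Qed.

Lemma xsum_convex x y (c : R) S :
  xsum (c *: x + (1 - c) *: y) S = c * xsum x S + (1 - c) * xsum y S.
Proof. by rewrite /xsum !mulr_sumr -big_split; apply: eq_bigr => i _; rewrite !mxE. Qed.

Lemma xsum_xw w S : xsum (xw R D w) S = (\sum_(j < n) nentries (filling_col D w j) S)%:R.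
Proof.
rewrite /xsum; under eq_bigr do rewrite mxE.
by rewrite -natr_sum exchange_big; congr _%:R; apply: eq_bigr => j _; apply: sum_card_entries.
Qed.

Lemma wprefixT w : wprefix w n = setT.
Proof. by apply/setP => v; rewrite !inE ltn_ord. Qed.

Lemma xsum_wprefixS x w (i : 'I_n) : xsum x (wprefix w i.+1) = xsum x (wprefix w i) + x 0 (w i).
Proof.
have -> : wprefix w i.+1 = w i |: wprefix w i.
  apply/setP => v; rewrite !inE ltnS leq_eqVlt.
  by rewrite val_eqE (can2_eq (permKV w) (permK w)).
by rewrite /xsum big_setU1 /= ?inE ?permK ?ltnn // addrC.
Qed.

Lemma eq_row_wprefix w x y : (forall t, xsum x (wprefix w t) = xsum y (wprefix w t)) -> x = y.
Proof.
move=> eq_xy; apply/rowP => k; rewrite -(permKV w k).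
by apply: (@addrI _ (xsum x (wprefix w ((w^-1)%g k)))); rewrite -xsum_wprefixS !eq_xy xsum_wprefixS.
Qed.

Lemma tight_xw_wprefix w t : tight (xw R D w) (wprefix w t).
Proof.
rewrite /tight xsum_xw /theta; apply/eqP; congr _%:R.
by apply: eq_bigr => j _; apply: nentries_filling_prefix.
Qed.

Lemma xw_in_schubitope w : schubitope D (xw R D w).
Proof.
apply/schubitopeP; split; last by rewrite -(wprefixT w); apply: tight_xw_wprefix.
by move=> S; rewrite xsum_xw ler_nat; apply: leq_sum => j _; apply: nentries_filling_le.
Qed.

(* A face cut out by a maximal chain of tight inequalities is a single point. *)
Lemma tight_chain_vertex w x : schubitope D x ->
  (forall t, tight x (wprefix w t)) -> is_vertex (schubitope D) x.
Proof.
move=> Px tight_x; split=> // y z c /schubitopeP[le_y _] /schubitopeP[le_z _] c0 c1 xE.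
apply: (@eq_row_wprefix w) => t; set W := wprefix w t.
have := xsum_convex y z c W; rewrite -xE (eqP (tight_x t)).
have := le_y W; have := le_z W; nra.
Qed.

Lemma xw_vertex w : is_vertex (schubitope D) (xw R D w).
Proof. exact: tight_chain_vertex (xw_in_schubitope w) (tight_xw_wprefix w). Qed.

End Schubitope.

Section TightSets.
Variables (R : realType) (n : nat) (D : diagram n) (x : 'rV[R]_n).
Hypothesis Px : schubitope D x.
Implicit Types (S T : {set 'I_n}).

Lemma tightUI S T : tight D x S -> tight D x T -> tight D x (S :|: T) && tight D x (S :&: T).
Proof.
move=> /eqP tS /eqP tT; have [le_x _] := (schubitopeP D x).1 Px.
have := theta_submod D S T; rewrite -(ler_nat R) !natrD.
have := xsumUI x S T; have := le_x (S :|: T); have := le_x (S :&: T); rewrite tS tT.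
by move=> *; apply/andP; split; apply/eqP; lra.
Qed.

Lemma tight_bigcup (I : finType) (P : pred I) (F : I -> {set 'I_n}) :
  (forall i, P i -> tight D x (F i)) -> tight D x (\bigcup_(i | P i) F i).
Proof.
move=> tF; apply: (big_ind (tight D x)) => // [|S T tS tT]; last by case/andP: (tightUI tS tT).
by rewrite /tight /xsum big_set0 theta0.
Qed.

Lemma tight_bigcap (I : finType) (P : pred I) (F : I -> {set 'I_n}) :
  (forall i, P i -> tight D x (F i)) -> tight D x (\bigcap_(i | P i) F i).
Proof.
move=> tF; apply: (big_ind (tight D x)) => // [|S T tS tT]; last by case/andP: (tightUI tS tT).
exact: ((schubitopeP D x).1 Px).2.
Qed.

(* Otherwise [x + c (e_a - e_b)] stays in the polytope for small [|c|]: tight inequalities do not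
   see this direction and the other ones have slack. *)
Lemma vertex_tight_separates a b : is_vertex (schubitope D) x -> a != b ->
  exists2 S, tight D x S & (a \in S) != (b \in S).
Proof.
move=> [_ ext] ab.
have [/existsP[S /andP[tS sep]] | none] :=
  boolP [exists S, tight D x S && ((a \in S) != (b \in S))]; first by exists S.
have same S : tight D x S -> (a \in S) = (b \in S).
  by move=> tS; apply/eqP/negPn; move: none; rewrite negb_exists => /forallP/(_ S); rewrite tS.
have [le_x tT] := (schubitopeP D x).1 Px.
pose eps := \big[Order.min/1]_(S | ~~ tight D x S) ((theta D S)%:R - xsum x S).
have eps_gt0 : 0 < eps.
  by apply/bigmin_gtP; split=> // S nS; rewrite subr_gt0 lt_def eq_sym nS le_x.
pose d : 'rV[R]_n := \row_k ((k == a)%:R - (k == b)%:R).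
have xsum_d c S : xsum (x + c *: d) S = xsum x S + c * ((a \in S)%:R - (b \in S)%:R).
  rewrite /xsum -(sum_eq_mem S a) -(sum_eq_mem S b) !natr_sum -sumrB mulr_sumr -big_split /=.
  by apply: eq_bigr => i _; rewrite !mxE.
have schub_d c : - eps <= c -> c <= eps -> schubitope D (x + c *: d).
  move=> c_lo c_hi; apply/schubitopeP; split=> [S|]; last first.
    by rewrite /tight xsum_d (same _ tT) subrr mulr0 addr0.
  rewrite xsum_d; have [tS | nS] := boolP (tight D x S).
    by rewrite (same _ tS) subrr mulr0 addr0 (eqP tS).
  have : eps <= (theta D S)%:R - xsum x S by apply: bigmin_le_cond.
  by case: (a \in S); case: (b \in S) => /=; lra.
have half_gt0 : (0 : R) < 2^-1 by rewrite invr_gt0.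
have half_lt1 : (2^-1 : R) < 1 by rewrite invf_lt1 // ltr1n.
have x_mid : x = 2^-1 *: (x + eps *: d) + (1 - 2^-1) *: (x + (- eps) *: d).
  by apply/rowP => k; rewrite !mxE; field.
have x_plus : schubitope D (x + eps *: d) by apply: schub_d; lra.
have x_minus : schubitope D (x + (- eps) *: d) by apply: schub_d; lra.
move/(congr1 (fun m : 'rV[R]_n => m 0 a)): (ext _ _ _ x_plus x_minus half_gt0 half_lt1 x_mid).
by rewrite !mxE eqxx (negbTE ab) /=; lra.
Qed.

Definition tight_hull k := \bigcap_(S | tight D x S && (k \in S)) S.

Lemma tight_hull_tight k : tight D x (tight_hull k).
Proof. by apply: tight_bigcap => S /andP[]. Qed.

Lemma mem_tight_hull k : k \in tight_hull k.
Proof. by apply/bigcapP => S /andP[]. Qed.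

Lemma tight_hull_min k S : tight D x S -> k \in S -> tight_hull k \subset S.
Proof. by move=> tS kS; apply: bigcap_inf; rewrite tS. Qed.

Lemma card_tight_hull_lt a b : is_vertex (schubitope D) x -> a != b ->
  a \in tight_hull b -> (#|tight_hull a| < #|tight_hull b|)%N.
Proof.
move=> vx ab a_b; apply/proper_card/properP; split.
  exact: tight_hull_min (tight_hull_tight b) a_b.
exists b; first exact: mem_tight_hull.
have [S tS] := vertex_tight_separates vx ab.
case aS: (a \in S); case bS: (b \in S) => // _.
  by apply/negP => /(subsetP (tight_hull_min tS aS)); rewrite bS.
by have := subsetP (tight_hull_min tS bS) a a_b; rewrite aS.
Qed.

(* Ordering the elements by the size of their tight hulls makes every prefix of [w] a union of
   tight hulls. *)
Lemma vertex_is_xw : is_vertex (schubitope D) x -> exists w : 'S_n, x = xw R D w.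
Proof.
move=> vx; have [w sort_w] := perm_sorting (fun k => #|tight_hull k|); exists w.
apply: (@eq_row_wprefix _ _ w) => t; rewrite (eqP (@tight_xw_wprefix R n D w t)).
suff -> : wprefix w t = \bigcup_(b in wprefix w t) tight_hull b.
  by apply/eqP/tight_bigcup => b _; apply: tight_hull_tight.
apply/setP => v; apply/idP/bigcupP => [vt | [b bt v_b]].
  by exists v => //; apply: mem_tight_hull.
have [-> // | vb] := eqVneq v b.
move: bt; rewrite !inE; exact: ltn_trans (sort_w _ _ (card_tight_hull_lt vx vb v_b)).
Qed.

End TightSets.

Theorem theorem1p1 (R : realType) (n : nat) (hn : (0 < n)%N) (D : diagram n) :
  forall x : 'rV[R]_n,
    is_vertex (schubitope D) x <-> exists w : 'S_n, x = xw R D w.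
Proof.
move=> x; split=> [vx | [w ->]]; last exact: xw_vertex.
exact: vertex_is_xw (proj1 vx) vx.
Qed.
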